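(* Let $M\ge2$ be an integer and let $\varepsilon$ be a real number with $0<\varepsilon<1$. Let $\alpha=[0;a_1,a_2,\ldots]$ be a real number whose partial quotients $a_i$ are all at most $M$. For each positive integer $n$, let $\overline{A}_n$ denote the finite word $a_na_{n-1}\ldots a_1$. Let $(t_i)_{i\ge1}$ be any sequence with values in $\{M+1,M+2\}$ and let $(n_i)_{i\ge1}$ be any sequence of positive integers satisfying $$\liminf_{i\to+\infty}\frac{n_{i+1}}{n_i} > \frac{4\log(M+3)}{\varepsilon\log 2}.$$ Set $$\beta=[0;\overline{A}_{n_1},t_1,\overline{A}_{n_2},t_2,\overline{A}_{n_3},t_3,\ldots],$$ i.e. the continued fraction whose sequence of partial quotients is $a_{n_1},\ldots,a_1,t_1,a_{n_2},\ldots,a_1,t_2,a_{n_3},\ldots,a_1,t_3,\ldots$. Then $1,\alpha,\beta$ are linearly independent over $\mathbb{Q}$, and there exist infinitely many positive integers $q$ such that $$q\cdot\Vert q\alpha\Vert\cdot\Vert q\beta\Vert\le\frac{1}{q^{1-\varepsilon}}.$$ In particular, $\inf_{q\ge1} q\cdot\Vert q\alpha\Vert\cdot\Vert q\beta\Vert=0$.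
   Context: For a real number $x$, $\Vert x\Vert$ denotes the distance from $x$ to the nearest integer. $[0;b_1,b_2,\ldots]$ denotes the simple continued fraction with partial quotients $b_1,b_2,\ldots$ (positive integers). *)

From Stdlib Require Import Reals Lra List QArith Qreals.
From Coquelicot Require Import Coquelicot.
Import ListNotations.
Open Scope R_scope.

Definition dist_int (x : R) : R := Rmin (frac_part x) (1 - frac_part x).

Fixpoint cf_fin (l : list nat) : R :=
  match l with
  | nil => 0
  | b :: l' => 1 / (INR b + cf_fin l')
  end.

Definition convergent (b : nat -> nat) (n : nat) : R :=
  cf_fin (map b (seq 1 n)).

Definition is_cf_value (b : nat -> nat) (x : R) : Prop :=
  Un_cv (convergent b) x.

Definition rev_word (a : nat -> nat) (m : nat) : list nat :=
  map a (rev (seq 1 m)).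

Definition beta_block (a t ns : nat -> nat) (i : nat) : list nat :=
  rev_word a (ns i) ++ [t i].

(* k-th partial quotient (k >= 1) of
   [0; \overline{A}_{n_1}, t_1, \overline{A}_{n_2}, t_2, ...].
   Each block is nonempty, so the first k blocks contain at least k letters. *)
Definition beta_pq (a t ns : nat -> nat) (k : nat) : nat :=
  nth (k - 1) (concat (map (beta_block a t ns) (seq 1 k))) 0%nat.

(* Let [p_n / q_n] be the convergents of alpha, and cut beta just before [t_(j+1)].
   The last block reverses [a_1 ... a_n] ([n = n_(j+1)]), and continuant matrices of
   reversed words are transposed, so the convergent denominator of beta at the cut is
   [q = A q_n + B q_(n-1)], where [A >= (M + 1) B] are the continuants of the first [j]
   blocks (the last partial quotient [t_j] exceeds [M]).  Hence [||q beta|| <= 1/q],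
   while [q alpha] is within [A / q_n] of the integer [A p_n + B p_(n-1)], and at least
   [c A / q_n] away from it for a fixed [c > 0], because the tails of alpha stay above
   [1 / (M + 1)].
   So [q ||q alpha|| ||q beta|| <= A / q_n] with [A <= (M + 3)^|blocks|] and
   [q_n >= (8/5)^(n-1)]; the lacunarity of [n_j] makes [A^2] negligible against [q_n^eps],
   which gives the bound.  For an integer relation [u0 + u1 alpha + u2 beta = 0], the
   integer [u1 (q alpha - X) + u2 (q beta - P)] is then [0] for large [j], and comparing
   [||q alpha|| >= c A / q_n] with [||q beta|| <= 1 / (A q_n)] forces [u1 = u2 = 0]. *)

From Stdlib Require Import Reals Lra Lia List QArith Qreals.
From Coquelicot Require Import Coquelicot.
Import ListNotations.
Open Scope R_scope.

(** * Continuant matrices *)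

Record mat := Mat { m11 : nat; m12 : nat; m21 : nat; m22 : nat }.

Definition mat_mul (m n : mat) : mat :=
  Mat (m11 m * m11 n + m12 m * m21 n) (m11 m * m12 n + m12 m * m22 n)
      (m21 m * m11 n + m22 m * m21 n) (m21 m * m12 n + m22 m * m22 n).

Definition mat_id : mat := Mat 1 0 0 1.

Definition mat_tr (m : mat) : mat := Mat (m11 m) (m21 m) (m12 m) (m22 m).

Definition mat_det (m : mat) : R :=
  INR (m11 m) * INR (m22 m) - INR (m12 m) * INR (m21 m).

(* [cf_mat [b_1; ...; b_n] = [[q_n, q_(n-1)], [p_n, p_(n-1)]]], where
   [p_k / q_k] are the convergents of [[0; b_1, ..., b_n]]. *)
Fixpoint cf_mat (l : list nat) : mat :=
  match l with
  | nil => mat_id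
  | x :: l' => mat_mul (Mat x 1 1 0) (cf_mat l')
  end.

Lemma mat_mulA m n p : mat_mul m (mat_mul n p) = mat_mul (mat_mul m n) p.
Proof. destruct m, n, p; unfold mat_mul; simpl; f_equal; ring. Qed.

Lemma mat_mul1l m : mat_mul mat_id m = m.
Proof. destruct m; unfold mat_mul; simpl; f_equal; ring. Qed.

Lemma mat_mul1r m : mat_mul m mat_id = m.
Proof. destruct m; unfold mat_mul; simpl; f_equal; ring. Qed.

Lemma mat_tr_mul m n : mat_tr (mat_mul m n) = mat_mul (mat_tr n) (mat_tr m).
Proof. destruct m, n; unfold mat_mul, mat_tr; simpl; f_equal; ring. Qed.

Lemma cf_mat_app l r : cf_mat (l ++ r) = mat_mul (cf_mat l) (cf_mat r).
Proof.
  induction l as [|x l IH]; simpl.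
  - now rewrite mat_mul1l.
  - now rewrite IH, mat_mulA.
Qed.

Lemma cf_mat_rev l : cf_mat (rev l) = mat_tr (cf_mat l).
Proof.
  induction l as [|x l IH]; [reflexivity|].
  simpl. rewrite cf_mat_app, IH, mat_tr_mul; simpl.
  rewrite mat_mul1r. reflexivity.
Qed.

Lemma cf_mat_snoc l x :
  cf_mat (l ++ [x]) = let m := cf_mat l in
    Mat (m11 m * x + m12 m) (m11 m) (m21 m * x + m22 m) (m21 m).
Proof.
  rewrite cf_mat_app. simpl. destruct (cf_mat l); unfold mat_mul; simpl; f_equal; ring.
Qed.

Lemma cf_mat_det l : mat_det (cf_mat l) = (-1) ^ length l.
Proof.
  induction l as [|x l IH]; unfold mat_det in *; simpl; [lra|].
  destruct (cf_mat l) as [a b c d]; simpl in *.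
  rewrite !plus_INR, !mult_INR, <- IH; simpl. ring.
Qed.

Lemma Rabs_cf_mat_det l : Rabs (mat_det (cf_mat l)) = 1.
Proof. now rewrite cf_mat_det, <- RPow_abs, Rabs_m1, pow1. Qed.

Definition positive_word (l : list nat) : Prop := List.Forall (fun x => (1 <= x)%nat) l.

Definition word_between (lo hi : nat) (l : list nat) : Prop :=
  List.Forall (fun x => (lo <= x <= hi)%nat) l.

Lemma cf_mat_m11_pos l : positive_word l -> (1 <= m11 (cf_mat l))%nat.
Proof.
  induction 1 as [|x l Hx _ IH]; simpl; [lia|].
  destruct (cf_mat l); simpl in *; nia.
Qed.

Lemma cf_mat_ordered l : positive_word l -> l <> nil ->
  let m := cf_mat l in (m12 m <= m11 m /\ m22 m <= m21 m)%nat.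
Proof.
  induction 1 as [|x l Hx Hl IH]; intros Hne; [congruence|].
  destruct l as [|y l']; simpl in *; [lia|].
  specialize (IH ltac:(discriminate)). destruct (cf_mat (y :: l')); simpl in *; nia.
Qed.

Lemma cf_mat_col1_bound K l : word_between 1 K l ->
  INR (m11 (cf_mat l)) <= (INR K + 1) ^ length l /\
  INR (m21 (cf_mat l)) <= (INR K + 1) ^ length l.
Proof.
  induction 1 as [|x l Hx Hl IH]; simpl; [lra|].
  destruct (cf_mat l) as [a b c d]; simpl in *.
  assert (HxK : INR x <= INR K) by (apply le_INR; lia).
  pose proof (pos_INR a); pose proof (pos_INR c); pose proof (pos_INR x).
  set (P := (INR K + 1) ^ length l) in *.
  rewrite !plus_INR, !mult_INR; simpl INR.
  assert (0 <= P) by (apply pow_le; pose proof (pos_INR K); lra).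
  assert (INR x * INR a <= INR K * P) by (apply Rmult_le_compat; lra).
  split; nra.
Qed.

(* [8/5] is below the golden ratio, so [q_(n+1) >= q_n + q_(n-1)] propagates the bound. *)
Lemma cf_mat_m11_growth l : positive_word l -> (8 / 5) ^ length l <= 8 / 5 * INR (m11 (cf_mat l)).
Proof.
  enough (H : positive_word l -> (8 / 5) ^ length l <= 8 / 5 * INR (m11 (cf_mat l)) /\
    (l <> nil -> (8 / 5) ^ length l <= (8 / 5) ^ 2 * INR (m12 (cf_mat l)))) by (intro; now apply H).
  induction l as [|x l IH] using rev_ind; intros Hl; simpl; [split; [lra|congruence]|].
  apply Forall_app in Hl as [Hl Hx]. inversion Hx as [|? ? Hx1]; subst.
  destruct (IH Hl) as [IH1 IH2].
  rewrite cf_mat_snoc, length_app; simpl. rewrite Nat.add_1_r; simpl pow.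
  pose proof (cf_mat_m11_pos l Hl) as H11.
  destruct (cf_mat l) as [a b c d]; simpl in *.
  apply le_INR in Hx1, H11. simpl in Hx1, H11.
  rewrite plus_INR, mult_INR.
  pose proof (pos_INR a); pose proof (pos_INR b).
  assert (Hxa : INR a <= INR a * INR x) by nra.
  split; intros; [|nra].
  destruct l as [|y l]; simpl in *.
  - nra.
  - specialize (IH2 ltac:(discriminate)). nra.
Qed.

Lemma word_between_positive lo hi l : (1 <= lo)%nat -> word_between lo hi l -> positive_word l.
Proof. intros Hlo H. eapply Forall_impl; [|exact H]. simpl. lia. Qed.

(** * Finite continued fractions and their tails *)

Fixpoint cf_tail (l : list nat) (z : R) : R :=
  match l with
  | nil => z
  | x :: l' => 1 / (INR x + cf_tail l' z)
  end.

Lemma cf_fin_app l r : cf_fin (l ++ r) = cf_tail l (cf_fin r).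
Proof. induction l as [|x l IH]; simpl; [reflexivity|]. now rewrite IH. Qed.

Definition mobius (m : mat) (z : R) : R :=
  (INR (m21 m) + INR (m22 m) * z) / (INR (m11 m) + INR (m12 m) * z).

Lemma mobius_den_pos m z : (1 <= m11 m)%nat -> 0 <= z -> 0 < INR (m11 m) + INR (m12 m) * z.
Proof.
  intros Hm Hz. apply le_INR in Hm. pose proof (pos_INR (m12 m)). simpl in Hm. nra.
Qed.

Lemma cf_tail_mobius l z : positive_word l -> 0 <= z -> cf_tail l z = mobius (cf_mat l) z.
Proof.
  intros Hl Hz. induction Hl as [|x l Hx Hl IH]; unfold mobius in *; simpl.
  - field.
  - rewrite IH. pose proof (mobius_den_pos _ _ (cf_mat_m11_pos l Hl) Hz).
    destruct (cf_mat l) as [a b c d]; simpl in *.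
    apply le_INR in Hx. simpl in Hx.
    pose proof (pos_INR c); pose proof (pos_INR d).
    assert (0 <= (INR c + INR d * z) / (INR a + INR b * z)) by (apply Rdiv_le_0_compat; nra).
    rewrite !plus_INR, !mult_INR; simpl INR. field. split; [|lra].
    replace (INR x * INR a + INR c + (INR x * INR b + INR d) * z)
      with ((INR a + INR b * z) * (INR x + (INR c + INR d * z) / (INR a + INR b * z)))
      by (field; lra).
    apply Rgt_not_eq, Rmult_lt_0_compat; lra.
Qed.

Lemma cf_fin_unit l : positive_word l -> 0 <= cf_fin l <= 1.
Proof.
  induction 1 as [|x l Hx _ IH]; simpl; [lra|].
  apply le_INR in Hx. simpl in Hx. split.
  - apply Rlt_le, Rdiv_lt_0_compat; lra.
  - unfold Rdiv. rewrite Rmult_1_l, <- Rinv_1. apply Rinv_le_contravar; lra.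
Qed.

Lemma cf_fin_cons_lower x l : positive_word (x :: l) -> 1 / (INR x + 1) <= cf_fin (x :: l).
Proof.
  intros Hl. inversion Hl as [|? ? Hx Hl']; subst.
  pose proof (cf_fin_unit l Hl'). apply le_INR in Hx. simpl in *.
  apply Rmult_le_compat_l; [lra|]. apply Rinv_le_contravar; lra.
Qed.

(* [cf_lower M] is the value of [[0; M, 1, M + 1]]. *)
Definition cf_lower (M : nat) : R := 1 / (INR M + (INR M + 1) / (INR M + 2)).

Lemma cf_lower_gt M : 1 / (INR M + 1) < cf_lower M.
Proof.
  unfold cf_lower. pose proof (pos_INR M).
  assert ((INR M + 1) / (INR M + 2) < 1).
  { apply (Rmult_lt_reg_r (INR M + 2)); [lra|]. field_simplify; lra. }
  assert (0 < (INR M + 1) / (INR M + 2)) by (apply Rdiv_lt_0_compat; lra).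
  apply Rmult_lt_compat_l; [lra|]. apply Rinv_lt_contravar; nra.
Qed.

Lemma cf_fin_ge_cf_lower M l : word_between 1 M l -> (3 <= length l)%nat -> cf_lower M <= cf_fin l.
Proof.
  intros Hl Hlen.
  destruct l as [|x [|y [|w l]]]; simpl in Hlen; try lia.
  inversion Hl as [|? ? Hx Hl1]; inversion Hl1 as [|? ? Hy Hl2]; subst.
  pose proof (cf_fin_cons_lower w l (word_between_positive 1 M _ (le_n 1) Hl2)) as Hw.
  assert (HwM : 1 / (INR w + 1) >= 1 / (INR M + 1)).
  { inversion Hl2; subst. apply Rle_ge, Rmult_le_compat_l; [lra|].
    apply Rinv_le_contravar; [pose proof (pos_INR w); lra|]. apply Rplus_le_compat_r, le_INR; lia. }
  set (v := cf_fin (w :: l)) in *.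
  change (cf_fin (x :: y :: w :: l)) with (1 / (INR x + 1 / (INR y + v))).
  destruct Hx as [Hx0 Hx]; destruct Hy as [Hy _].
  apply le_INR in Hx0, Hx, Hy. simpl INR in *.
  assert (0 < 1 / (INR M + 1)) by (apply Rdiv_lt_0_compat; lra).
  assert (Hyv : 1 / (INR y + v) <= (INR M + 1) / (INR M + 2)).
  { apply Rle_trans with (1 / (1 + 1 / (INR M + 1))).
    - apply Rmult_le_compat_l; [lra|]. apply Rinv_le_contravar; lra.
    - right. field. lra. }
  assert (0 < 1 / (INR y + v)) by (apply Rdiv_lt_0_compat; lra).
  unfold cf_lower. apply Rmult_le_compat_l; [lra|]. apply Rinv_le_contravar; lra.
Qed.

Lemma mobius_error m (u v z : R) : 0 < INR (m11 m) + INR (m12 m) * z ->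
  (u * INR (m11 m) + v * INR (m12 m)) * mobius m z - (u * INR (m21 m) + v * INR (m22 m))
  = mat_det m * (u * z - v) / (INR (m11 m) + INR (m12 m) * z).
Proof. intros Hden. unfold mobius, mat_det. field. lra. Qed.

Lemma mobius_error_bounds m (u v z : R) :
  Rabs (mat_det m) = 1 -> (1 <= m11 m)%nat -> (m12 m <= m11 m)%nat -> 0 <= z <= 1 ->
  let E := (u * INR (m11 m) + v * INR (m12 m)) * mobius m z - (u * INR (m21 m) + v * INR (m22 m)) in
  Rabs (u * z - v) / (2 * INR (m11 m)) <= Rabs E <= Rabs (u * z - v) / INR (m11 m).
Proof.
  intros Hdet H1 H2 Hz E. pose proof (mobius_den_pos m z H1 (proj1 Hz)) as Hden.
  unfold E. rewrite mobius_error, Rabs_div, Rabs_mult, Hdet, Rmult_1_l by lra.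
  rewrite (Rabs_pos_eq (_ + _)) by lra.
  apply le_INR in H1, H2. simpl in H1. pose proof (Rabs_pos (u * z - v)). pose proof (pos_INR (m12 m)).
  split; apply Rmult_le_compat_l; try lra; apply Rinv_le_contravar; nra.
Qed.

Lemma lim_abs_affine_between (u : nat -> R) (x k X lo hi : R) :
  Un_cv u x -> eventually (fun m => lo <= Rabs (k * u m - X) <= hi) ->
  lo <= Rabs (k * x - X) <= hi.
Proof.
  intros Hu Hev. apply is_lim_seq_Reals in Hu.
  assert (Hlim : is_lim_seq (fun m => Rabs (k * u m - X)) (Rabs (k * x - X))).
  { apply (is_lim_seq_abs _ (k * x - X)).
    apply (is_lim_seq_minus _ _ (k * x) X); [|apply is_lim_seq_const|reflexivity].
    now apply (is_lim_seq_scal_l _ k x). }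
  destruct Hev as [N HN].
  split.
  - apply (is_lim_seq_le_loc (fun _ => lo) (fun m => Rabs (k * u m - X)) lo (Rabs (k * x - X)));
      [exists N; intros m Hm; apply HN, Hm | apply is_lim_seq_const | exact Hlim].
  - apply (is_lim_seq_le_loc (fun m => Rabs (k * u m - X)) (fun _ => hi) (Rabs (k * x - X)) hi);
      [exists N; intros m Hm; apply HN, Hm | exact Hlim | apply is_lim_seq_const].
Qed.

Lemma positive_word_map (b : nat -> nat) s n :
  (forall i, (1 <= i)%nat -> (1 <= b i)%nat) -> (1 <= s)%nat -> positive_word (map b (seq s n)).
Proof.
  intros Hb Hs. apply Forall_forall. intros x Hx.
  apply in_map_iff in Hx as [i [<- Hi]]. apply in_seq in Hi. apply Hb. lia.
Qed.

Lemma convergent_split (b : nat -> nat) n m :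
  (forall i, (1 <= i)%nat -> (1 <= b i)%nat) ->
  convergent b (n + m) = mobius (cf_mat (map b (seq 1 n))) (cf_fin (map b (seq (1 + n) m))).
Proof.
  intros Hb. unfold convergent. rewrite seq_app, map_app, cf_fin_app.
  apply cf_tail_mobius; [apply positive_word_map; auto|].
  apply cf_fin_unit, positive_word_map; auto; lia.
Qed.

Lemma cf_value_combination_error (b : nat -> nat) (x : R) n (u v lo hi e1 e2 : R) :
  is_cf_value b x -> (forall i, (1 <= i)%nat -> (1 <= b i)%nat) -> (1 <= n)%nat ->
  0 <= lo -> hi <= 1 ->
  (exists m0, forall m, (m0 <= m)%nat -> lo <= cf_fin (map b (seq (1 + n) m)) <= hi) ->
  (forall z, lo <= z <= hi -> e1 <= Rabs (u * z - v) <= e2) ->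
  let m := cf_mat (map b (seq 1 n)) in
  e1 / (2 * INR (m11 m)) <=
    Rabs ((u * INR (m11 m) + v * INR (m12 m)) * x - (u * INR (m21 m) + v * INR (m22 m)))
  <= e2 / INR (m11 m).
Proof.
  intros Hx Hb Hn Hlo Hhi [m0 Htail] He m.
  assert (Hw : positive_word (map b (seq 1 n))) by (apply positive_word_map; auto).
  assert (Hne : map b (seq 1 n) <> nil) by (destruct n; [lia|discriminate]).
  pose proof (cf_mat_m11_pos _ Hw) as Hm11.
  pose proof (cf_mat_ordered _ Hw Hne) as [Hm12 _].
  assert (Hm : 0 < INR (m11 m)) by (apply lt_0_INR; unfold m; lia).
  apply (lim_abs_affine_between (convergent b)); [exact Hx|].
  exists (n + m0)%nat. intros k Hk.
  replace k with (n + (k - n))%nat by lia. rewrite convergent_split by exact Hb.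
  set (z := cf_fin (map b (seq (1 + n) (k - n)))).
  assert (Hz : lo <= z <= hi) by (apply Htail; lia).
  destruct (He z Hz) as [He1 He2].
  destruct (mobius_error_bounds m u v z (Rabs_cf_mat_det _) Hm11 Hm12 ltac:(lra)) as [H1 H2].
  split.
  - eapply Rle_trans; [|exact H1]. unfold Rdiv.
    apply Rmult_le_compat_r; [|exact He1]. apply Rlt_le, Rinv_0_lt_compat. lra.
  - eapply Rle_trans; [exact H2|]. unfold Rdiv.
    apply Rmult_le_compat_r; [|exact He2]. apply Rlt_le, Rinv_0_lt_compat. lra.
Qed.

Section BetaWord.
Variables a t ns : nat -> nat.

Definition beta_word (j : nat) : list nat := concat (map (beta_block a t ns) (seq 1 j)).

Lemma beta_word_S j :
  beta_word (S j) = beta_word j ++ rev (map a (seq 1 (ns (S j)))) ++ [t (S j)].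
Proof.
  unfold beta_word. rewrite seq_S, map_app, concat_app; simpl.
  unfold beta_block, rev_word. now rewrite map_rev, app_nil_r.
Qed.

Lemma beta_word_length_S j :
  length (beta_word (S j)) = (length (beta_word j) + ns (S j) + 1)%nat.
Proof. rewrite beta_word_S, !length_app, length_rev, length_map, length_seq; simpl. lia. Qed.

Lemma beta_word_length_ge j : (j <= length (beta_word j))%nat.
Proof. induction j; [simpl; lia|]. rewrite beta_word_length_S. lia. Qed.

Lemma beta_word_prefix j k : (j <= k)%nat -> exists s, beta_word k = beta_word j ++ s.
Proof.
  induction 1 as [|k _ [s Hs]]; [exists nil; now rewrite app_nil_r|].
  eexists. rewrite beta_word_S, Hs, <- app_assoc. reflexivity.
Qed.

Lemma beta_pq_nth J k : (1 <= k)%nat -> (k <= length (beta_word J))%nat ->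
  beta_pq a t ns k = nth (k - 1) (beta_word J) 0%nat.
Proof.
  intros H1 H2. unfold beta_pq. fold (beta_word k).
  pose proof (beta_word_length_ge k).
  destruct (Nat.le_ge_cases k J) as [Hle|Hle];
    destruct (beta_word_prefix _ _ Hle) as [s ->]; rewrite app_nth1; auto; lia.
Qed.

Lemma map_beta_pq_firstn J L : (L <= length (beta_word J))%nat ->
  map (beta_pq a t ns) (seq 1 L) = firstn L (beta_word J).
Proof.
  intros HL. apply nth_ext with (d := 0%nat) (d' := 0%nat).
  - rewrite length_map, length_seq, length_firstn. lia.
  - intros i Hi. rewrite length_map, length_seq in Hi.
    rewrite nth_firstn, (proj2 (Nat.ltb_lt i L) Hi).
    rewrite (nth_indep _ 0%nat (beta_pq a t ns 0)) by (rewrite length_map, length_seq; lia).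
    rewrite map_nth, seq_nth, (beta_pq_nth J) by lia. f_equal. lia.
Qed.

End BetaWord.

(** * Simultaneous approximations read off the blocks of beta *)

Definition simultaneous_approx (c alpha beta : R) (q X P A qn : nat) : Prop :=
  (1 <= qn)%nat /\ INR A * INR qn <= INR q <= 2 * INR A * INR qn /\
  c * INR A / INR qn <= Rabs (INR q * alpha - INR X) <= INR A / INR qn /\
  0 < Rabs (INR q * beta - INR P) <= 1 / INR q.

Section Construction.
Variables (M : nat) (a t ns : nat -> nat) (alpha beta : R).
Hypothesis Ha : forall i, (1 <= i)%nat -> (1 <= a i <= M)%nat.
Hypothesis Halpha : is_cf_value a alpha.
Hypothesis Ht : forall i, (1 <= i)%nat -> t i = (M + 1)%nat \/ t i = (M + 2)%nat.
Hypothesis Hn : forall i, (1 <= i)%nat -> (1 <= ns i)%nat.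
Hypothesis Hbeta : is_cf_value (beta_pq a t ns) beta.

Local Notation W := (beta_word a t ns).

Lemma alpha_word_between s n : (1 <= s)%nat -> word_between 1 M (map a (seq s n)).
Proof.
  intros Hs. apply Forall_forall. intros x Hx.
  apply in_map_iff in Hx as [i [<- Hi]]. apply in_seq in Hi. apply Ha. lia.
Qed.

Lemma beta_word_between j : word_between 1 (M + 2) (W j).
Proof.
  induction j as [|j IH]; [constructor|].
  rewrite beta_word_S. apply Forall_app; split; [exact IH|].
  apply Forall_app; split.
  - apply Forall_rev. eapply Forall_impl; [|apply (alpha_word_between 1); lia]. simpl. lia.
  - constructor; [|constructor]. destruct (Ht (S j)); lia.
Qed.

Lemma beta_pq_pos k : (1 <= k)%nat -> (1 <= beta_pq a t ns k)%nat.
Proof.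
  intros Hk. pose proof (beta_word_length_ge a t ns k).
  rewrite (beta_pq_nth a t ns k k) by lia.
  assert (Hin : In (nth (k - 1) (W k) 0%nat) (W k)) by (apply nth_In; lia).
  pose proof (proj1 (Forall_forall _ _) (beta_word_between k) _ Hin) as Hx; cbv beta in Hx. lia.
Qed.

Lemma beta_word_mat_ratio j : (1 <= j)%nat ->
  (INR M + 1) * INR (m12 (cf_mat (W j))) <= INR (m11 (cf_mat (W j))).
Proof.
  intros Hj. destruct j as [|j]; [lia|].
  rewrite beta_word_S, app_assoc, cf_mat_snoc; simpl.
  assert (Htj : INR M + 1 <= INR (t (S j))).
  { rewrite <- S_INR. apply le_INR. destruct (Ht (S j)); lia. }
  destruct (cf_mat (W j ++ rev (map a (seq 1 (ns (S j)))))) as [x y z w]; simpl.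
  rewrite plus_INR, mult_INR. pose proof (pos_INR x). pose proof (pos_INR y). nra.
Qed.

Lemma beta_word_m11_ge j : (S j <= m11 (cf_mat (W j)))%nat.
Proof.
  induction j as [|j IH]; [simpl; lia|].
  rewrite beta_word_S, app_assoc, cf_mat_snoc, cf_mat_app; simpl.
  assert (HR : (1 <= m11 (cf_mat (rev (map a (seq 1 (ns (S j)))))))%nat).
  { apply cf_mat_m11_pos, Forall_rev, (word_between_positive 1 M); auto.
    apply alpha_word_between; lia. }
  assert (Htj : (2 <= t (S j))%nat) by (pose proof (Ha 1 (le_n 1)); destruct (Ht (S j)); lia).
  destruct (cf_mat (W j)) as [x y z w], (cf_mat (rev (map a (seq 1 (ns (S j)))))) as [x' y' z' w'].
  simpl in *. assert (x <= x * x')%nat by nia. nia.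
Qed.

Definition alpha_gap : R := (cf_lower M - 1 / (INR M + 1)) / 2.

Lemma alpha_gap_pos : 0 < alpha_gap.
Proof. unfold alpha_gap. pose proof (cf_lower_gt M). lra. Qed.

(* Since [[0; a_(n+1), a_(n+2), ...]] is at least [cf_lower M], the ratio
   [B / A <= 1 / (M + 1)] keeps [A z - B] away from [0]. *)
Lemma alpha_combination_error n (A B : nat) :
  (1 <= n)%nat -> (INR M + 1) * INR B <= INR A ->
  let m := cf_mat (map a (seq 1 n)) in
  alpha_gap * INR A / INR (m11 m) <=
    Rabs (INR (A * m11 m + B * m12 m) * alpha - INR (A * m21 m + B * m22 m))
  <= INR A / INR (m11 m).
Proof.
  intros Hn1 HAB m. rewrite !plus_INR, !mult_INR.
  pose proof (cf_lower_gt M) as Hlow. pose proof (pos_INR A) as HA. pose proof (pos_INR B) as HB0.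
  assert (HM1 : 0 < INR M + 1) by (pose proof (pos_INR M); lra).
  assert (HM1' : 0 < 1 / (INR M + 1)) by (apply Rdiv_lt_0_compat; lra).
  assert (HB : INR B <= 1 / (INR M + 1) * INR A).
  { apply (Rmult_le_reg_l (INR M + 1)); [lra|]. field_simplify; lra. }
  assert (Hm : 0 < INR (m11 m)).
  { apply lt_0_INR, cf_mat_m11_pos, (word_between_positive 1 M); auto.
    apply alpha_word_between; lia. }
  destruct (cf_value_combination_error a alpha n (INR A) (INR B) (cf_lower M) 1
     ((cf_lower M - 1 / (INR M + 1)) * INR A) (INR A) Halpha (fun i Hi => proj1 (Ha i Hi)) Hn1)
    as [Hlo Hhi]; try lra.
  - exists 3%nat. intros k Hk. split; [|apply cf_fin_unit, (word_between_positive 1 M); auto].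
    + apply cf_fin_ge_cf_lower; [apply alpha_word_between; lia|]. now rewrite length_map, length_seq.
    + apply alpha_word_between; lia.
  - intros z Hz. rewrite Rabs_pos_eq; nra.
  - split.
    + eapply Rle_trans; [|exact Hlo]. right. unfold alpha_gap, m in *. field. lra.
    + exact Hhi.
Qed.

Lemma beta_block_end_error j :
  let m := cf_mat (W j ++ rev (map a (seq 1 (ns (S j))))) in
  0 < Rabs (INR (m11 m) * beta - INR (m21 m)) <= 1 / INR (m11 m).
Proof.
  set (V := W j ++ rev (map a (seq 1 (ns (S j))))). intros m.
  set (L := length V).
  assert (HWS : W (S j) = V ++ [t (S j)]) by (unfold V; now rewrite beta_word_S, app_assoc).
  assert (HLS : (1 + L <= length (W (S j)))%nat) by (rewrite HWS, length_app; simpl; lia).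
  assert (Hprefix : map (beta_pq a t ns) (seq 1 L) = V).
  { rewrite (map_beta_pq_firstn a t ns (S j)) by lia.
    unfold L. now rewrite HWS, firstn_app, firstn_all, Nat.sub_diag, app_nil_r. }
  assert (Hnext : beta_pq a t ns (S L) = t (S j)).
  { rewrite (beta_pq_nth a t ns (S j)) by lia.
    rewrite HWS, app_nth2 by lia. now replace (S L - 1 - length V)%nat with 0%nat by lia. }
  assert (HM3 : 0 < INR M + 3) by (pose proof (pos_INR M); lra).
  assert (Hlo : 0 < 1 / (INR M + 3)) by (apply Rdiv_lt_0_compat; lra).
  assert (HL : (1 <= L)%nat) by (unfold L, V; rewrite length_app, length_rev, length_map, length_seq;
    pose proof (Hn (S j)); lia).
  destruct (cf_value_combination_error (beta_pq a t ns) beta L 1 0 (1 / (INR M + 3)) 1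
     (1 / (INR M + 3)) 1 Hbeta beta_pq_pos HL) as [H1 H2].
  - lra.
  - lra.
  - exists 1%nat. intros k Hk. destruct k as [|k]; [lia|].
    assert (Hw : positive_word (map (beta_pq a t ns) (seq (1 + L) (S k))))
      by (apply positive_word_map; [exact beta_pq_pos|lia]).
    split; [|now apply cf_fin_unit].
    simpl seq in *; simpl map in *. rewrite Hnext in *.
    eapply Rle_trans; [|exact (cf_fin_cons_lower _ _ Hw)].
    apply Rmult_le_compat_l; [lra|]. apply Rinv_le_contravar.
    + pose proof (pos_INR (t (S j))); lra.
    + rewrite <- S_INR. replace (INR M + 3) with (INR (S (M + 2))) by (rewrite S_INR, plus_INR; simpl; lra).
      apply le_INR. destruct (Ht (S j)); lia.
  - intros z Hz. rewrite Rabs_pos_eq; lra.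
  - rewrite Hprefix in H1, H2. fold m in H1, H2.
    replace ((1 * INR (m11 m) + 0 * INR (m12 m)) * beta - (1 * INR (m21 m) + 0 * INR (m22 m)))
      with (INR (m11 m) * beta - INR (m21 m)) in H1, H2 by ring.
    split; [|exact H2]. eapply Rlt_le_trans; [|exact H1].
    assert (0 < INR (m11 m)).
    { apply lt_0_INR, cf_mat_m11_pos. rewrite <- Hprefix. apply positive_word_map; [exact beta_pq_pos|lia]. }
    apply Rdiv_lt_0_compat; lra.
Qed.

(* [q] is the denominator of the convergent of [beta] ending just before [t_(j+1)];
   it is [A q_n + B q_(n-1)], where [A, B] come from the first [j] blocks and
   [q_n] are the convergent denominators of [alpha], [n = n_(j+1)]. *)
Lemma approx_at_level j : (1 <= j)%nat ->
  exists q X P A qn : nat,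
    simultaneous_approx alpha_gap alpha beta q X P A qn /\
    (S j <= A)%nat /\ INR A <= (INR M + 3) ^ length (W j) /\
    (8 / 5) ^ ns (S j) <= 8 / 5 * INR qn.
Proof.
  intros Hj.
  set (l := map a (seq 1 (ns (S j)))).
  assert (Hn1 : (1 <= ns (S j))%nat) by (apply Hn; lia).
  assert (Hl : positive_word l) by (apply (word_between_positive 1 M), alpha_word_between; lia).
  assert (Hlne : l <> nil) by (unfold l; destruct (ns (S j)); [lia|discriminate]).
  pose proof (beta_block_end_error j) as Hbeta_err.
  rewrite cf_mat_app, cf_mat_rev in Hbeta_err. fold l in Hbeta_err.
  pose proof (alpha_combination_error _ _ _ Hn1 (beta_word_mat_ratio j Hj)) as Halpha_err.
  pose proof (beta_word_m11_ge j) as HA.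
  pose proof (beta_word_mat_ratio j Hj) as HAB.
  pose proof (proj1 (cf_mat_col1_bound (M + 2) _ (beta_word_between j))) as HAbound.
  pose proof (cf_mat_m11_growth l Hl) as Hgrowth.
  pose proof (cf_mat_m11_pos l Hl) as Hqn.
  pose proof (cf_mat_ordered l Hl Hlne) as [Hqq _].
  fold l in Halpha_err.
  unfold l in Hgrowth at 1. rewrite length_map, length_seq in Hgrowth.
  destruct (cf_mat (W j)) as [A B C D], (cf_mat l) as [a1 b1 c1 d1].
  simpl in *.
  exists (A * a1 + B * b1)%nat, (A * c1 + B * d1)%nat, (C * a1 + D * b1)%nat, A, a1.
  repeat split; try lia; try apply Halpha_err; try apply Hbeta_err; try lra.
  - rewrite plus_INR, mult_INR. pose proof (pos_INR (B * b1)). lra.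
  - rewrite plus_INR, !mult_INR. apply le_INR in Hqq.
    assert (HBA : INR B <= INR A) by (pose proof (pos_INR B); pose proof (pos_INR M); nra).
    assert (INR B * INR b1 <= INR A * INR a1) by (apply Rmult_le_compat; auto using pos_INR).
    lra.
  - replace (INR M + 3) with (INR (M + 2) + 1) by (rewrite plus_INR; simpl; lra). exact HAbound.
Qed.

End Construction.

(** * Lacunarity *)

Lemma unbounded_of_increments (f : nat -> R) j0 :
  (forall j, (j0 <= j)%nat -> f j + 1 <= f (S j)) ->
  forall K, exists J, forall j, (J <= j)%nat -> K <= f j.
Proof.
  intros Hf K.
  assert (Hlin : forall i, f j0 + INR i <= f (j0 + i)%nat).
  { induction i as [|i IH]; [rewrite Nat.add_0_r; simpl; lra|].
    rewrite Nat.add_succ_r, S_INR. specialize (Hf (j0 + i)%nat ltac:(lia)). lra. }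
  destruct (INR_unbounded (K - f j0)) as [k Hk].
  exists (j0 + k)%nat. intros j Hj.
  replace j with (j0 + (j - j0))%nat by lia. specialize (Hlin (j - j0)%nat).
  assert (INR k <= INR (j - j0)) by (apply le_INR; lia). lra.
Qed.

Lemma unbounded_of_geometric_growth (n : nat -> R) (r : R) j0 :
  1 < r -> (forall j, (j0 <= j)%nat -> 1 <= n j /\ r * n j <= n (S j)) ->
  forall K, exists J, forall j, (J <= j)%nat -> K <= n j.
Proof.
  intros Hr Hn K.
  destruct (unbounded_of_increments (fun j => n j / (r - 1)) j0) with (K := K / (r - 1))
    as [J HJ].
  { intros j Hj. destruct (Hn j Hj) as [H1 H2].
    apply (Rmult_le_reg_r (r - 1)); [lra|]. field_simplify; nra. }
  exists J. intros j Hj. specialize (HJ j Hj). cbv beta in HJ.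
  apply (Rmult_le_reg_r (/ (r - 1))); [apply Rinv_0_lt_compat; lra|exact HJ].
Qed.

(* With [mu] strictly between [kap] and [r - 1], [n_(j+1) - mu s_j] eventually
   increases by at least [1] at each step. *)
Lemma geometric_growth_dominates_sums (n s : nat -> R) (r kap C : R) j0 :
  0 <= kap -> kap + 1 < r ->
  (forall j, (j0 <= j)%nat -> 1 <= n j /\ r * n j <= n (S j)) ->
  (forall j, s (S j) = s j + n (S j) + 1) -> (forall j, 0 <= s j) ->
  exists J, forall j, (J <= j)%nat -> C + kap * s j <= n (S j).
Proof.
  intros Hkap Hr Hn Hs Hs0.
  set (mu := (kap + r - 1) / 2).
  assert (Hgap : 0 < r - 1 - mu) by (unfold mu; lra).
  destruct (unbounded_of_geometric_growth n r j0 ltac:(lra) Hn ((mu + 1) / (r - 1 - mu)))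
    as [J1 HJ1].
  destruct (unbounded_of_increments (fun j => n (S j) - mu * s j) (max j0 J1)) with (K := C)
    as [J2 HJ2].
  { intros j Hj. rewrite Hs.
    destruct (Hn (S j) ltac:(lia)) as [_ Hgrow].
    specialize (HJ1 (S j) ltac:(lia)).
    apply (Rmult_le_compat_l (r - 1 - mu)) in HJ1; [|lra].
    replace ((r - 1 - mu) * ((mu + 1) / (r - 1 - mu))) with (mu + 1) in HJ1 by (field; lra).
    lra. }
  exists J2. intros j Hj. specialize (HJ2 j Hj). cbv beta in HJ2.
  pose proof (Hs0 j). assert (kap <= mu) by (unfold mu; lra). nra.
Qed.

Lemma liminf_gt_eventually (u : nat -> R) (L0 : R) :
  Rbar_lt L0 (LimInf_seq u) -> exists r N, L0 < r /\ forall n, (N <= n)%nat -> r < u n.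
Proof.
  intros H. destruct (ex_LimInf_seq u) as [l Hl].
  rewrite (is_LimInf_seq_unique _ _ Hl) in H.
  destruct l as [l| |]; simpl in H; [|clear H|contradiction].
  - assert (He : 0 < (l - L0) / 2) by lra.
    destruct (Hl (mkposreal _ He)) as [_ [N HN]]. simpl in HN.
    exists ((l + L0) / 2), N. split; [lra|]. intros n Hn. specialize (HN n Hn). lra.
  - destruct (Hl (L0 + 1)) as [N HN]. exists (L0 + 1), N. split; [lra|exact HN].
Qed.

Lemma ln_8_5_ge : 2 * ln 2 <= 3 * ln (8 / 5).
Proof.
  pose proof (ln_pow 2 2 ltac:(lra)) as E1. pose proof (ln_pow (8 / 5) 3 ltac:(lra)) as E2.
  assert (ln (2 ^ 2) < ln ((8 / 5) ^ 3)) by (apply ln_increasing; simpl; lra).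
  simpl INR in E1, E2. lra.
Qed.

(* With [q_n >= (8/5)^(n-1)] the lacunarity needed is [kap = 2 ln(M+3) / (eps ln(8/5))];
   the hypothesis provides a ratio above [4 ln(M+3) / (eps ln 2) > kap + 1]. *)
Lemma growth_constant_margin (lam e : R) : ln 2 < lam -> 0 < e < 1 ->
  2 * lam / (e * ln (8 / 5)) + 1 < 4 * lam / (e * ln 2).
Proof.
  intros Hlam He. pose proof ln_8_5_ge.
  assert (Hl2 : 0 < ln 2) by (rewrite <- ln_1; apply ln_increasing; lra).
  assert (Hl : 0 < ln (8 / 5)) by (rewrite <- ln_1; apply ln_increasing; lra).
  assert (H1 : 2 * lam / (e * ln (8 / 5)) <= 3 * lam / (e * ln 2)).
  { replace (2 * lam / (e * ln (8 / 5))) with (lam / e * / (ln (8 / 5) / 2)) by (field; lra).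
    replace (3 * lam / (e * ln 2)) with (lam / e * / (ln 2 / 3)) by (field; lra).
    apply Rmult_le_compat_l; [apply Rlt_le, Rdiv_lt_0_compat; lra|].
    apply Rinv_le_contravar; lra. }
  assert (H2 : 1 < lam / (e * ln 2)).
  { apply (Rmult_lt_reg_r (e * ln 2)); [nra|]. field_simplify; nra. }
  replace (4 * lam / (e * ln 2)) with (3 * lam / (e * ln 2) + lam / (e * ln 2)) by (field; lra).
  lra.
Qed.

Lemma four_sq_le_Rpower (A Q eps : R) : 0 < A -> 0 < Q ->
  ln 4 + 2 * ln A <= eps * ln Q -> 4 * A ^ 2 <= Rpower Q eps.
Proof.
  intros HA HQ H. unfold Rpower.
  replace (4 * A ^ 2) with (exp (ln 4 + 2 * ln A)).
  - destruct H as [H|H]; [left; apply exp_increasing; lra|right; now rewrite H, Rmult_comm].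
  - replace (2 * ln A) with (ln A + ln A) by ring.
    rewrite !exp_plus, !exp_ln by lra. ring.
Qed.

Lemma dist_int_nonneg x : 0 <= dist_int x.
Proof. unfold dist_int. pose proof (base_fp x). apply Rmin_glb; lra. Qed.

Lemma dist_int_le x (k : Z) : dist_int x <= Rabs (x - IZR k).
Proof.
  unfold dist_int. pose proof (base_fp x) as Hfp.
  assert (Hx : x = IZR (Int_part x) + frac_part x) by (unfold frac_part; ring).
  destruct (Z.lt_total k (Int_part x)) as [Hk|[Hk|Hk]].
  - apply IZR_lt in Hk. assert (IZR k + 1 <= IZR (Int_part x)) by
      (rewrite <- plus_IZR; apply IZR_le; apply lt_IZR in Hk; lia).
    rewrite Rabs_pos_eq by lra. apply Rle_trans with (frac_part x); [apply Rmin_l|lra].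
  - subst k. rewrite Rabs_pos_eq by lra. apply Rle_trans with (frac_part x); [apply Rmin_l|lra].
  - assert (IZR (Int_part x) + 1 <= IZR k) by (rewrite <- plus_IZR; apply IZR_le; lia).
    rewrite Rabs_left by lra. apply Rle_trans with (1 - frac_part x); [apply Rmin_r|lra].
Qed.

Lemma dist_int_le_nat x (k : nat) : dist_int x <= Rabs (x - INR k).
Proof. rewrite INR_IZR_INZ. apply dist_int_le. Qed.

Lemma Rabs_IZR_ge_1 (z : Z) : z <> 0%Z -> 1 <= Rabs (IZR z).
Proof. intros Hz. rewrite Rabs_Zabs. apply IZR_le. lia. Qed.

Lemma integer_relation_small_errors (alpha beta : R) (u0 u1 u2 : Z) (q X P : nat) :
  IZR u0 + IZR u1 * alpha + IZR u2 * beta = 0 ->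
  Rabs (IZR u1) * Rabs (INR q * alpha - INR X) + Rabs (IZR u2) * Rabs (INR q * beta - INR P) < 1 ->
  IZR u1 * (INR q * alpha - INR X) + IZR u2 * (INR q * beta - INR P) = 0.
Proof.
  intros Heq Hsmall.
  set (z := (- (u0 * Z.of_nat q + u1 * Z.of_nat X + u2 * Z.of_nat P))%Z).
  assert (Hz : IZR u1 * (INR q * alpha - INR X) + IZR u2 * (INR q * beta - INR P) = IZR z).
  { unfold z. rewrite !INR_IZR_INZ, opp_IZR, !plus_IZR, !mult_IZR.
    replace (IZR u0) with (- IZR u1 * alpha - IZR u2 * beta) by lra. ring. }
  rewrite Hz. enough (Hz0 : z = 0%Z) by (rewrite Hz0; reflexivity).
  destruct (Z.eq_dec z 0) as [|Hne]; [assumption|exfalso].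
  pose proof (Rabs_IZR_ge_1 z Hne) as Hz1. rewrite <- Hz in Hz1.
  pose proof (Rabs_triang (IZR u1 * (INR q * alpha - INR X)) (IZR u2 * (INR q * beta - INR P))).
  rewrite !Rabs_mult in *. lra.
Qed.

Section Criterion.
Variables (eps c alpha beta : R).
Hypothesis Heps : 0 < eps < 1.
Hypothesis Hc : 0 < c.

(* [q^(1-eps) <= (2 A q_n)^(1-eps) <= 2 A q_n / q_n^eps <= q_n / (2 A)]. *)
Lemma Rpower_le_of_approx (q A qn : R) : 1 <= A -> 1 <= qn -> 0 < q <= 2 * A * qn ->
  4 * A ^ 2 <= Rpower qn eps -> A * Rpower q (1 - eps) <= qn / 2.
Proof.
  intros HA Hqn Hq Heps_qn.
  assert (Hpow : 0 < Rpower qn eps) by apply exp_pos.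
  assert (B1 : Rpower q (1 - eps) <= Rpower (2 * A) (1 - eps) * Rpower qn (1 - eps)).
  { rewrite Rpower_mult_distr by lra. apply Rle_Rpower_l; lra. }
  assert (B2 : Rpower (2 * A) (1 - eps) <= 2 * A).
  { rewrite <- (Rpower_1 (2 * A)) at 2 by lra. apply Rle_Rpower; lra. }
  assert (B3 : Rpower qn (1 - eps) = qn / Rpower qn eps).
  { unfold Rminus. rewrite Rpower_plus, Rpower_Ropp, Rpower_1 by lra. reflexivity. }
  assert (B4 : qn / Rpower qn eps <= qn / (4 * A ^ 2)).
  { apply Rmult_le_compat_l; [lra|]. apply Rinv_le_contravar; nra. }
  assert (0 <= Rpower qn (1 - eps)) by (left; apply exp_pos).
  apply Rle_trans with (A * (2 * A * (qn / (4 * A ^ 2)))).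
  - apply Rmult_le_compat_l; [lra|]. rewrite <- B3 in B4.
    apply Rle_trans with (2 * A * Rpower qn (1 - eps)); [|apply Rmult_le_compat_l; lra].
    eapply Rle_trans; [exact B1|]. apply Rmult_le_compat_r; lra.
  - right. field. lra.
Qed.

Lemma approx_product_le (q X P A qn : nat) : (1 <= A)%nat ->
  4 * INR A ^ 2 <= Rpower (INR qn) eps -> simultaneous_approx c alpha beta q X P A qn ->
  INR q * dist_int (INR q * alpha) * dist_int (INR q * beta) <= 1 / Rpower (INR q) (1 - eps).
Proof.
  intros HA1 Hpow (Hqn & [Hq1 Hq2] & [_ Halpha] & [_ Hbeta]).
  apply (le_INR 1) in HA1, Hqn. simpl in HA1, Hqn.
  assert (Hq : 0 < INR q) by nra.
  pose proof (Rpower_le_of_approx (INR q) (INR A) (INR qn) HA1 Hqn (conj Hq Hq2) Hpow) as Hkey.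
  assert (Hrq : 0 < Rpower (INR q) (1 - eps)) by apply exp_pos.
  pose proof (dist_int_nonneg (INR q * alpha)) as Dα0.
  pose proof (Rle_trans _ _ _ (dist_int_le_nat (INR q * alpha) X) Halpha) as Dα.
  pose proof (Rle_trans _ _ _ (dist_int_le_nat (INR q * beta) P) Hbeta) as Dβ.
  apply Rle_trans with (INR q * (INR A / INR qn) * (1 / INR q)).
  - apply Rmult_le_compat; [nra|apply dist_int_nonneg|apply Rmult_le_compat_l|]; lra.
  - replace (INR q * (INR A / INR qn) * (1 / INR q)) with (INR A / INR qn) by (field; lra).
    apply (Rmult_le_reg_r (INR qn * Rpower (INR q) (1 - eps))); [nra|].
    replace (INR A / INR qn * (INR qn * Rpower (INR q) (1 - eps)))
      with (INR A * Rpower (INR q) (1 - eps)) by (field; lra).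
    replace (1 / Rpower (INR q) (1 - eps) * (INR qn * Rpower (INR q) (1 - eps)))
      with (INR qn) by (field; lra).
    lra.
Qed.

Hypothesis Happrox : forall K : nat, exists q X P A qn : nat, (K <= A)%nat /\
  4 * INR A ^ 2 <= Rpower (INR qn) eps /\ simultaneous_approx c alpha beta q X P A qn.

Lemma approx_product_small : forall N : nat, exists q : nat, (N < q)%nat /\
  INR q * dist_int (INR q * alpha) * dist_int (INR q * beta) <= 1 / Rpower (INR q) (1 - eps).
Proof.
  intros N. destruct (Happrox (S N)) as (q & X & P & A & qn & HA & Hpow & Happ).
  exists q. split; [|apply (approx_product_le q X P A qn); auto; lia].
  destruct Happ as (Hqn & [Hq _] & _). apply INR_lt.
  apply (le_INR 1) in Hqn. apply le_INR in HA. rewrite S_INR in HA.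
  pose proof (pos_INR N). simpl in Hqn. nra.
Qed.

(* If [u0 + u1 alpha + u2 beta = 0], then [u1 (q alpha - X) + u2 (q beta - P)] is an
   integer of absolute value [< 1]; comparing the sizes of the two errors then
   forces [u2 = 0], and so [u1 = 0]. *)
Lemma approx_Z_independent (u0 u1 u2 : Z) : IZR u0 + IZR u1 * alpha + IZR u2 * beta = 0 ->
  u0 = 0%Z /\ u1 = 0%Z /\ u2 = 0%Z.
Proof.
  intros Heq.
  set (U1 := Rabs (IZR u1)). set (U2 := Rabs (IZR u2)).
  assert (HU1 : 0 <= U1) by apply Rabs_pos. assert (HU2 : 0 <= U2) by apply Rabs_pos.
  assert (HU2c : 0 <= U2 / c) by (apply Rdiv_le_0_compat; lra).
  destruct (INR_unbounded (U1 + U2 + U2 / c + 1)) as [K HK].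
  destruct (Happrox K) as (q & X & P & A & qn & HA & Hpow & Hqn & [HqA Hq2] & [Hα1 Hα2] & [Hβ0 Hβ2]).
  apply le_INR in HA. apply (le_INR 1) in Hqn. simpl in Hqn.
  assert (HA1 : 1 <= INR A) by lra.
  set (E1 := INR q * alpha - INR X) in *. set (E2 := INR q * beta - INR P) in *.
  assert (HE1 : Rabs E1 <= 1 / (4 * INR A)).
  { assert (Hqn_pow : Rpower (INR qn) eps <= INR qn).
    { rewrite <- (Rpower_1 (INR qn)) at 2 by lra. apply Rle_Rpower; lra. }
    eapply Rle_trans; [exact Hα2|].
    apply (Rmult_le_reg_r (4 * INR A * INR qn)); [nra|].
    replace (INR A / INR qn * (4 * INR A * INR qn)) with (4 * INR A ^ 2) by (field; lra).
    replace (1 / (4 * INR A) * (4 * INR A * INR qn)) with (INR qn) by (field; lra). lra. }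
  assert (HE2 : Rabs E2 <= 1 / (INR A * INR qn)).
  { eapply Rle_trans; [exact Hβ2|]. apply Rmult_le_compat_l; [lra|]. apply Rinv_le_contravar; nra. }
  assert (HE2' : Rabs E2 <= 1 / INR A).
  { eapply Rle_trans; [exact HE2|]. apply Rmult_le_compat_l; [lra|]. apply Rinv_le_contravar; nra. }
  assert (Hrel : IZR u1 * E1 + IZR u2 * E2 = 0).
  { apply (integer_relation_small_errors alpha beta u0); [exact Heq|]. fold U1 U2.
    apply Rle_lt_trans with (U1 * (1 / (4 * INR A)) + U2 * (1 / INR A)).
    - apply Rplus_le_compat; apply Rmult_le_compat_l; auto.
    - apply (Rmult_lt_reg_r (INR A)); [lra|].
      replace ((U1 * (1 / (4 * INR A)) + U2 * (1 / INR A)) * INR A) with (U1 / 4 + U2)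
        by (field; lra).
      nra. }
  assert (Hu2 : u2 = 0%Z).
  { destruct (Z.eq_dec u2 0) as [|Hne]; [assumption|exfalso].
    pose proof (Rabs_IZR_ge_1 u2 Hne) as HU2'. fold U2 in HU2'.
    assert (HEq : U1 * Rabs E1 = U2 * Rabs E2).
    { unfold U1, U2. rewrite <- !Rabs_mult. replace (IZR u1 * E1) with (- (IZR u2 * E2)) by lra.
      apply Rabs_Ropp. }
    assert (HU1' : 1 <= U1).
    { destruct (Z.eq_dec u1 0) as [Hu1|Hu1]; [|exact (Rabs_IZR_ge_1 u1 Hu1)].
      exfalso. unfold U1 in HEq. rewrite Hu1, Rabs_R0 in HEq. nra. }
    assert (Hlow : c * INR A / INR qn <= U2 / (INR A * INR qn)).
    { assert (Rabs E1 <= U1 * Rabs E1) by (pose proof (Rabs_pos E1); nra).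
      apply Rle_trans with (U1 * Rabs E1); [lra|]. rewrite HEq.
      replace (U2 / (INR A * INR qn)) with (U2 * (1 / (INR A * INR qn))) by (field; nra).
      apply Rmult_le_compat_l; lra. }
    apply (Rmult_le_compat_r (INR A * INR qn)) in Hlow; [|nra].
    replace (c * INR A / INR qn * (INR A * INR qn)) with (c * INR A * INR A) in Hlow by (field; lra).
    replace (U2 / (INR A * INR qn) * (INR A * INR qn)) with U2 in Hlow by (field; nra).
    assert (Hc2 : U2 + c <= c * INR A).
    { replace (U2 + c) with (c * (U2 / c + 1)) by (field; lra).
      apply Rmult_le_compat_l; lra. }
    nra. }
  subst u2.
  assert (Hu1 : u1 = 0%Z).
  { destruct (Z.eq_dec u1 0) as [|Hne]; [assumption|exfalso].
    assert (Hprod : IZR u1 * E1 = 0) by lra.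
    apply Rmult_integral in Hprod as [H|H]; [now apply eq_IZR_R0 in H|].
    rewrite H, Rabs_R0 in Hα1.
    assert (0 < c * INR A / INR qn) by (apply Rdiv_lt_0_compat; nra). lra. }
  subst u1. repeat split. apply eq_IZR. lra.
Qed.

End Criterion.

Lemma Q_independent_of_Z_independent (x y : R) :
  (forall u0 u1 u2 : Z, IZR u0 + IZR u1 * x + IZR u2 * y = 0 ->
     u0 = 0%Z /\ u1 = 0%Z /\ u2 = 0%Z) ->
  forall r0 r1 r2 : Q, Q2R r0 + Q2R r1 * x + Q2R r2 * y = 0 ->
    (r0 == 0)%Q /\ (r1 == 0)%Q /\ (r2 == 0)%Q.
Proof.
  intros HZ [n0 d0] [n1 d1] [n2 d2] Heq. unfold Q2R, Qeq in *; simpl in *.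
  assert (H0 : 0 < IZR (Z.pos d0)) by (apply IZR_lt; lia).
  assert (H1 : 0 < IZR (Z.pos d1)) by (apply IZR_lt; lia).
  assert (H2 : 0 < IZR (Z.pos d2)) by (apply IZR_lt; lia).
  destruct (HZ (n0 * Z.pos d1 * Z.pos d2)%Z (n1 * Z.pos d0 * Z.pos d2)%Z (n2 * Z.pos d0 * Z.pos d1)%Z)
    as (E0 & E1 & E2).
  { rewrite !mult_IZR.
    transitivity (IZR (Z.pos d0) * IZR (Z.pos d1) * IZR (Z.pos d2) *
      (IZR n0 * / IZR (Z.pos d0) + IZR n1 * / IZR (Z.pos d1) * x + IZR n2 * / IZR (Z.pos d2) * y)).
    - field. lra.
    - rewrite Heq. ring. }
  lia.
Qed.

Lemma arbitrarily_small_of_power_decay (f : nat -> R) (d : R) : 0 < d ->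
  (forall N : nat, exists q : nat, (N < q)%nat /\ f q <= 1 / Rpower (INR q) d) ->
  forall e : R, 0 < e -> exists q : nat, (1 <= q)%nat /\ f q < e.
Proof.
  intros Hd Hf e He.
  destruct (INR_unbounded (exp (ln (/ e) / d))) as [N HN].
  destruct (Hf N) as [q [Hq Hfq]].
  exists q. split; [lia|].
  assert (HqN : exp (ln (/ e) / d) < INR q) by (apply lt_INR in Hq; lra).
  assert (Hq0 : 0 < INR q) by (pose proof (exp_pos (ln (/ e) / d)); lra).
  assert (Hinv : / e < Rpower (INR q) d).
  { unfold Rpower. rewrite <- (exp_ln (/ e)) by (apply Rinv_0_lt_compat; lra).
    apply exp_increasing.
    apply (Rmult_lt_reg_l (/ d)); [apply Rinv_0_lt_compat; lra|].
    rewrite <- Rmult_assoc, Rinv_l, Rmult_1_l by lra. rewrite Rmult_comm.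
    rewrite <- (ln_exp (ln (/ e) * / d)). apply ln_increasing; [apply exp_pos|exact HqN]. }
  eapply Rle_lt_trans; [exact Hfq|].
  unfold Rdiv. rewrite Rmult_1_l, <- (Rinv_inv e).
  apply Rinv_lt_contravar; [|exact Hinv].
  apply Rmult_lt_0_compat; [apply Rinv_0_lt_compat; lra|apply exp_pos].
Qed.

Section Main.
Variables (M : nat) (eps : R) (a t ns : nat -> nat) (alpha beta : R).
Hypothesis Heps : 0 < eps < 1.
Hypothesis Ha : forall i, (1 <= i)%nat -> (1 <= a i <= M)%nat.
Hypothesis Halpha : is_cf_value a alpha.
Hypothesis Ht : forall i, (1 <= i)%nat -> t i = (M + 1)%nat \/ t i = (M + 2)%nat.
Hypothesis Hn : forall i, (1 <= i)%nat -> (1 <= ns i)%nat.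
Hypothesis Hliminf : Rbar_lt
      (Finite (4 * ln (INR M + 3) / (eps * ln 2)))
      (LimInf_seq (fun i => INR (ns (S i)) / INR (ns i))).
Hypothesis Hbeta : is_cf_value (beta_pq a t ns) beta.

Lemma beta_word_length_dominated : exists J, forall j, (J <= j)%nat ->
  ln 4 + 2 * INR (length (beta_word a t ns j)) * ln (INR M + 3)
  <= eps * ((INR (ns (S j)) - 1) * ln (8 / 5)).
Proof.
  destruct (liminf_gt_eventually _ _ Hliminf) as [r [N [Hr HN]]].
  assert (Hl : 0 < ln (8 / 5)) by (rewrite <- ln_1; apply ln_increasing; lra).
  assert (HM3 : ln 2 < ln (INR M + 3)).
  { apply ln_increasing; [lra|]. pose proof (pos_INR M). lra. }
  assert (Hl2 : 0 < ln 2) by (rewrite <- ln_1; apply ln_increasing; lra).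
  set (kap := 2 * ln (INR M + 3) / (eps * ln (8 / 5))).
  pose proof (growth_constant_margin (ln (INR M + 3)) eps HM3 Heps) as Hmargin.
  assert (Hkap : 0 <= kap) by (apply Rlt_le, Rdiv_lt_0_compat; nra).
  assert (Hgrow : forall j, (max N 1 <= j)%nat -> 1 <= INR (ns j) /\ r * INR (ns j) <= INR (ns (S j))).
  { intros j Hj. specialize (HN j ltac:(lia)).
    assert (Hnj : 1 <= INR (ns j)) by (apply (le_INR 1), Hn; lia).
    split; [exact Hnj|].
    apply (Rmult_lt_compat_r (INR (ns j))) in HN; [|lra].
    unfold Rdiv in HN. rewrite Rmult_assoc, Rinv_l, Rmult_1_r in HN by lra. lra. }
  assert (Hlen : forall j, INR (length (beta_word a t ns (S j))) =
      INR (length (beta_word a t ns j)) + INR (ns (S j)) + 1).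
  { intros j. rewrite beta_word_length_S, !plus_INR. reflexivity. }
  destruct (geometric_growth_dominates_sums (fun j => INR (ns j))
      (fun j => INR (length (beta_word a t ns j))) r kap (1 + ln 4 / (eps * ln (8 / 5)))
      (max N 1) Hkap ltac:(unfold kap; lra) Hgrow Hlen (fun j => pos_INR _)) as [J HJ].
  exists J. intros j Hj. specialize (HJ j Hj). cbv beta in HJ.
  apply (Rmult_le_compat_l (eps * ln (8 / 5))) in HJ; [|nra].
  replace (eps * ln (8 / 5) * (1 + ln 4 / (eps * ln (8 / 5)) +
    kap * INR (length (beta_word a t ns j))))
    with (eps * ln (8 / 5) + ln 4 + 2 * INR (length (beta_word a t ns j)) * ln (INR M + 3))
    in HJ by (unfold kap; field; nra).
  lra.
Qed.

Lemma good_approximations : forall K : nat, exists q X P A qn : nat, (K <= A)%nat /\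
  4 * INR A ^ 2 <= Rpower (INR qn) eps /\
  simultaneous_approx (alpha_gap M) alpha beta q X P A qn.
Proof.
  intros K. destruct beta_word_length_dominated as [J HJ].
  set (j := max J (max K 1)).
  destruct (approx_at_level M a t ns alpha beta Ha Halpha Ht Hn Hbeta j ltac:(lia))
    as (q & X & P & A & qn & Happ & HA & HAbound & Hgrowth).
  exists q, X, P, A, qn. split; [lia|split; [|exact Happ]].
  specialize (HJ j ltac:(lia)).
  destruct Happ as [Hqn _]. apply (le_INR 1) in Hqn. simpl in Hqn.
  assert (HA0 : 0 < INR A) by (apply lt_0_INR; lia).
  assert (Hl : 0 < 8 / 5) by lra.
  apply four_sq_le_Rpower; [exact HA0|lra|].
  assert (HlnA : ln (INR A) <= INR (length (beta_word a t ns j)) * ln (INR M + 3)).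
  { rewrite <- ln_pow by (pose proof (pos_INR M); lra). now apply ln_le. }
  assert (Hlnq : INR (ns (S j)) * ln (8 / 5) <= ln (8 / 5) + ln (INR qn)).
  { rewrite <- ln_pow, <- ln_mult by lra. apply ln_le; [apply pow_lt|]; lra. }
  nra.
Qed.

End Main.

Theorem theorem2
  (M : nat) (eps : R) (a t ns : nat -> nat) (alpha beta : R)
  (HM : (2 <= M)%nat)
  (Heps : 0 < eps < 1)
  (Ha : forall i, (1 <= i)%nat -> (1 <= a i <= M)%nat)
  (Halpha : is_cf_value a alpha)
  (Ht : forall i, (1 <= i)%nat -> t i = (M + 1)%nat \/ t i = (M + 2)%nat)
  (Hn : forall i, (1 <= i)%nat -> (1 <= ns i)%nat)
  (Hliminf : Rbar_lt
      (Finite (4 * ln (INR M + 3) / (eps * ln 2)))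
      (LimInf_seq (fun i => INR (ns (S i)) / INR (ns i))))
  (Hbeta : is_cf_value (beta_pq a t ns) beta) :
  (forall r0 r1 r2 : Q,
      Q2R r0 + Q2R r1 * alpha + Q2R r2 * beta = 0 ->
      (r0 == 0)%Q /\ (r1 == 0)%Q /\ (r2 == 0)%Q)
  /\ (forall N : nat, exists q : nat, (N < q)%nat /\
        INR q * dist_int (INR q * alpha) * dist_int (INR q * beta)
          <= 1 / Rpower (INR q) (1 - eps))
  /\ (forall q : nat, (1 <= q)%nat ->
        0 <= INR q * dist_int (INR q * alpha) * dist_int (INR q * beta))
  /\ (forall e : R, 0 < e -> exists q : nat, (1 <= q)%nat /\
        INR q * dist_int (INR q * alpha) * dist_int (INR q * beta) < e).
Proof.
  pose proof (good_approximations M eps a t ns alpha beta Heps Ha Halpha Ht Hn Hliminf Hbeta)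
    as Happrox.
  pose proof (approx_product_small eps _ alpha beta Heps Happrox) as Hsmall.
  split; [|split; [exact Hsmall|split]].
  - apply Q_independent_of_Z_independent.
    exact (approx_Z_independent eps _ alpha beta Heps (alpha_gap_pos M) Happrox).
  - intros q _. pose proof (pos_INR q).
    pose proof (dist_int_nonneg (INR q * alpha)). pose proof (dist_int_nonneg (INR q * beta)).
    apply Rmult_le_pos; [apply Rmult_le_pos|]; lra.
  - apply (arbitrarily_small_of_power_decay _ (1 - eps)); [lra|exact Hsmall].
Qed.
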